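(* Let $G$ be a graph with $n$ vertices and $m$ edges, and let $t(G)$ be its number of triangles. Then \[ 6n\,t(G)\geq \bigl(n+\lambda_n(G)\bigr)\sum_{u\in V(G)} d^2(u)-2nm\,\lambda_n(G), \] with equality if and only if $G$ is a complete multipartite graph (i.e. $V(G)$ can be partitioned into nonempty independent sets such that any two vertices in different sets are adjacent; a single part, i.e. an edgeless graph, is allowed).
   Context: All graphs are finite, simple and undirected. $d(u)$ denotes the degree of vertex $u$, and $t(G)$ the number of triangles (copies of $K_3$) in $G$. For a graph $G$ of order $n$, $L(G)=D(G)-A(G)$ is its Laplacian, where $A(G)$ is the adjacency matrix and $D(G)$ the diagonal degree matrix; its eigenvalues are $0=\lambda_1(G)\leq\dots\leq\lambda_n(G)$, so $\lambda_n(G)$ is the largest Laplacian eigenvalue. *)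

From mathcomp Require Import all_boot all_order all_algebra.
From mathcomp Require Import reals.
Set Implicit Arguments. Unset Strict Implicit. Unset Printing Implicit Defensive.
Import Order.TTheory GRing.Theory Num.Theory.
Local Open Scope ring_scope.

Definition simple_graph n (adj : rel 'I_n) : Prop :=
  symmetric adj /\ irreflexive adj.

Definition deg n (adj : rel 'I_n) (u : 'I_n) : nat := #|[set v | adj u v]|.

Definition cliques n (adj : rel 'I_n) (k : nat) : {set {set 'I_n}} :=
  [set S : {set 'I_n} | (#|S| == k) &&
     [forall u in S, forall v in S, (u != v) ==> adj u v]].

Definition num_edges n (adj : rel 'I_n) : nat := #|cliques adj 2|.
Definition num_triangles n (adj : rel 'I_n) : nat := #|cliques adj 3|.

Definition adj_mx (R : nzRingType) n (adj : rel 'I_n) : 'M[R]_n :=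
  \matrix_(i, j) (if adj i j then 1 else 0).
Definition deg_mx (R : nzRingType) n (adj : rel 'I_n) : 'M[R]_n :=
  \matrix_(i, j) (if i == j then (deg adj i)%:R else 0).
Definition laplacian (R : nzRingType) n (adj : rel 'I_n) : 'M[R]_n :=
  deg_mx R adj - adj_mx R adj.

Definition largest_eigenvalue (R : realType) n (M : 'M[R]_n) (lam : R) : Prop :=
  eigenvalue M lam /\ (forall mu, eigenvalue M mu -> mu <= lam).

Definition complete_multipartite n (adj : rel 'I_n) : Prop :=
  exists P : {set {set 'I_n}},
    partition P [set: 'I_n] /\
    forall u v, adj u v = (pblock P u != pblock P v).

From mathcomp Require Import all_boot all_order all_algebra.
From mathcomp Require Import reals complex ring lra.
Set Implicit Arguments. Unset Strict Implicit. Unset Printing Implicit Defensive.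

(* For a vertex v let x_v be the indicator vector of the neighbourhood of v,
   centred so as to be orthogonal to the all-ones vector.  As the Laplacian L is
   symmetric with largest eigenvalue lam, x_v L x_v^T <= lam |x_v|^2, with
   equality only for lam-eigenvectors.  Summed over v, the left-hand sides give
   sum d^2 - 6t (triangles enter as closed walks of length three) and the
   norms give 2m - (sum d^2)/n; this is the inequality.
   In the equality case every x_v is a lam-eigenvector, and comparing its
   entries at v and at a non-neighbour j of v gives N(v) <= N(j): non-adjacent
   vertices have equal neighbourhoods, i.e. the graph is complete multipartite.
   Conversely, in a complete multipartite graph x_v L = n x_v for all v; since
   no Laplacian eigenvalue exceeds n, either lam = n or every x_v vanishes, and
   equality holds in both cases. *)

Lemma sum_card_incident (T : finType) (X : {set {set T}}) k :
  {in X, forall S : {set T}, #|S| = k} ->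
  \sum_i #|[set S in X | i \in S]| = k * #|X|.
Proof.
move=> cardX.
have card_incident i : #|[set S in X | i \in S]| = \sum_(S in X) (i \in S).
  rewrite -sum1_card [RHS]big_mkcond [LHS]big_mkcond; apply: eq_bigr => S _.
  by rewrite inE; case: (S \in X); case: (i \in S).
under eq_bigr => i _ do rewrite card_incident.
rewrite exchange_big /= (eq_bigr (fun=> k)) => [|S SX].
  by rewrite sum_nat_const mulnC.
rewrite -(cardX S SX) -sum1_card [RHS]big_mkcond /=.
by apply: eq_bigr => i _; case: (i \in S).
Qed.

Lemma sum_bool_card (T : finType) (A : {pred T}) (P : pred T) :
  \sum_(i in A) P i = #|[set i in A | P i]|.
Proof.
rewrite -sum1dep_card [LHS]big_mkcond [RHS]big_mkcond /=.
by apply: eq_bigr => i _; case: (i \in A); case: (P i).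
Qed.

Section Counting.
Variables (n : nat) (adj : rel 'I_n).
Hypotheses (adjC : symmetric adj) (adj_irr : irreflexive adj).

Lemma cliquesP k (S : {set 'I_n}) :
  reflect (#|S| = k /\ {in S &, forall u v, u != v -> adj u v})
          (S \in cliques adj k).
Proof.
rewrite inE; apply: (iffP andP) => [[/eqP Sk /forall_inP clS] | [Sk clS]].
  split=> // u v uS vS; move/forall_inP/(_ v vS): (clS u uS); exact/implyP.
split; first exact/eqP.
apply/forall_inP => u uS; apply/forall_inP => v vS; apply/implyP; exact: clS.
Qed.

Lemma mem_cliques2 (S : {set 'I_n}) :
  (S \in cliques adj 2) = [exists x, exists y, adj x y && (S == [set x; y])].
Proof.
apply/cliquesP/existsP.
  case=> /eqP/cards2P [x [y [x_neq_y ->]]] clS.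
  exists x; apply/existsP; exists y; rewrite eqxx andbT.
  by apply: clS x_neq_y; rewrite !inE eqxx ?orbT.
case=> x /existsP [y /andP [xy /eqP ->]].
have x_neq_y : x != y by apply: contraTneq xy => ->; rewrite adj_irr.
split=> [|u v /set2P Hu /set2P Hv]; first by rewrite cards2 x_neq_y.
by case: Hu Hv => -> [] ->; rewrite ?eqxx // adjC.
Qed.

Lemma edges_within_through (W : {set 'I_n}) i : i \in W ->
  [set S in [set S in cliques adj 2 | S \subset W] | i \in S] =
  [set [set i; j] | j in [set j in W | adj i j]].
Proof.
move=> iW; apply/setP => S; rewrite 2!in_set; apply/idP/imsetP.
  case/andP => /andP [SC SW] iS; move: SC; rewrite mem_cliques2.
  case/existsP => x /existsP [y /andP [axy /eqP Sxy]].
  move: iS; rewrite Sxy => /set2P [] ix.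
    exists y; last by rewrite ix.
    by rewrite !inE ix axy (subsetP SW) // Sxy !inE eqxx orbT.
  exists x; last by rewrite ix setUC.
  by rewrite !inE ix adjC axy (subsetP SW) // Sxy !inE eqxx.
case=> j; rewrite inE => /andP [jW aij] ->.
rewrite mem_cliques2 set21 andbT; apply/andP; split.
  by apply/existsP; exists i; apply/existsP; exists j; rewrite aij eqxx.
by apply/subsetP => u /set2P [] ->.
Qed.

Lemma sum_adj_within (W : {set 'I_n}) :
  \sum_(i in W) \sum_(j in W) adj i j =
  2 * #|[set S in cliques adj 2 | S \subset W]|.
Proof.
rewrite -sum_card_incident; last first.
  by move=> S; rewrite in_set => /andP [/cliquesP[]].
rewrite [RHS](bigID (mem W)) /= [X in _ = _ + X]big1 ?addn0; last first.
  move=> i iW; apply/eqP; rewrite cards_eq0; apply/eqP/setP => S; rewrite !inE.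
  by apply/negbTE; apply: contra iW => /andP [/andP [_ /subsetP SW] /SW].
apply: eq_bigr => i iW; rewrite sum_bool_card edges_within_through //.
rewrite card_in_imset // => j1 j2; rewrite !inE => /andP [_ a1] /andP [_ a2] E.
have : j1 \in [set i; j2] by rewrite -E !inE eqxx orbT.
by case/set2P => // ji; rewrite ji adj_irr in a1.
Qed.

Lemma card_triangles_through u :
  #|[set S in cliques adj 3 | u \in S]| =
  #|[set T in cliques adj 2 | T \subset [set w | adj u w]]|.
Proof.
set N := [set w | adj u w].
have notin_nbhd (T : {set 'I_n}) : T \subset N -> u \notin T.
  by move=> TN; apply/negP => uT; have := subsetP TN u uT; rewrite inE adj_irr.
have -> : [set S in cliques adj 3 | u \in S] =
          [set u |: T | T in [set T in cliques adj 2 | T \subset N]].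
  apply/setP => S; rewrite in_set; apply/idP/imsetP.
    case/andP => /cliquesP [S3 clS] uS; exists (S :\ u); last by rewrite setD1K.
    rewrite in_set; apply/andP; split.
      apply/cliquesP; split; first by have := cardsD1 u S; rewrite uS S3 => -[].
      by move=> a b /setD1P [_ aS] /setD1P [_ bS]; exact: clS.
    apply/subsetP => w /setD1P [wu wS]; rewrite inE.
    by apply: clS => //; rewrite eq_sym.
  case=> T; rewrite in_set => /andP [/cliquesP [T2 clT] TN] ->.
  rewrite setU11 andbT; apply/cliquesP; split.
    by rewrite cardsU1 notin_nbhd // T2.
  move=> a b /setU1P [-> | aT] /setU1P [-> | bT]; rewrite ?eqxx //.
  - by move=> _; have := subsetP TN b bT; rewrite inE.
  - by move=> _; have := subsetP TN a aT; rewrite inE adjC.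
  - exact: clT.
rewrite card_in_imset // => T1 T2; rewrite !in_set.
move=> /andP [_ /notin_nbhd uT1] /andP [_ /notin_nbhd uT2] E.
by rewrite -(setU1K uT1) E setU1K.
Qed.

Lemma sum_adj : \sum_i \sum_j adj i j = 2 * num_edges adj.
Proof.
rewrite /num_edges.
have -> : cliques adj 2 = [set S in cliques adj 2 | S \subset setT].
  by apply/setP => S; rewrite in_set subsetT andbT.
rewrite -sum_adj_within.
by apply: eq_big => [i|i _]; rewrite ?inE //; apply: eq_bigl => j; rewrite inE.
Qed.

Lemma sum_closed_walks3 :
  \sum_u \sum_i \sum_j [&& adj u i, adj i j & adj j u] = 6 * num_triangles adj.
Proof.
rewrite (_ : 6 = 2 * 3) // -mulnA -(@sum_card_incident _ (cliques adj 3)); last first.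
  by move=> S /cliquesP[].
rewrite big_distrr /=; apply: eq_bigr => u _.
rewrite card_triangles_through -sum_adj_within [RHS]big_mkcond /=.
apply: eq_bigr => i _; rewrite inE; case: (adj u i) => /=; last by rewrite big1.
rewrite [RHS]big_mkcond /=; apply: eq_bigr => j _.
by rewrite inE [adj j u]adjC; case: (adj u j); rewrite ?andbT ?andbF.
Qed.

Lemma complete_multipartiteP :
  complete_multipartite adj <->
  (forall u v, ~~ adj u v -> [set w | adj u w] = [set w | adj v w]).
Proof.
split=> [[P [_ adjP]] u v | same_nbhd].
  by rewrite adjP negbK => /eqP Puv; apply/setP => w; rewrite !inE !adjP Puv.
have nbhd_eq u v : ([set w | adj u w] == [set w | adj v w]) = ~~ adj u v.
  apply/eqP/idP => [E | /same_nbhd //]; apply/negP => uv.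
  have : v \in [set w | adj u w] by rewrite inE.
  by rewrite E inE adj_irr.
pose nbhd u := [set w | adj u w].
have /and3P [/eqP cover_T triv _] := preim_partitionP nbhd [set: 'I_n].
exists (preim_partition nbhd [set: 'I_n]); split => [|u v].
  exact: preim_partitionP.
rewrite eq_pblock // ?cover_T ?inE //.
rewrite /preim_partition pblock_equivalence_partition ?inE //.
  by rewrite nbhd_eq negbK.
by move=> x y z _ _ _ /=; split => // /eqP ->.
Qed.

End Counting.

Import Order.TTheory GRing.Theory Num.Theory.
Local Open Scope ring_scope.

Section Rayleigh.
Local Open Scope sesquilinear_scope.

Lemma spectral_diag_eigenvalue (C : numClosedFieldType) n (A : 'M[C]_n) k :
  A \is normalmx -> eigenvalue A (spectral_diag A 0 k).
Proof.
have uP := spectral_unitarymx A.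
move=> /orthomx_spectralP; rewrite invmx_unitary //.
set P := spectralmx A; set d := spectral_diag A => eA.
apply/eigenvalueP; exists (row k P).
  rewrite [in LHS]eA -row_mul !mulmxA (unitarymxP uP) mul1mx.
  by rewrite row_mul row_diag_mx -scalemxAl -rowE.
apply/eqP => Pk0; have := (row_unitarymxP uP) k k.
rewrite Pk0 eqxx /dotmx /form_of_matrix /= !mul0mx trace_mx11 mxE.
by move=> /esym/eqP; rewrite oner_eq0.
Qed.

Lemma trmxC_mul (C : numClosedFieldType) m n p (A : 'M[C]_(m, n)) (B : 'M[C]_(n, p)) :
  (A *m B)^t* = B^t* *m A^t*.
Proof. by rewrite trmx_mul map_mxM. Qed.

Lemma hermitian_rayleigh_bound (C : numClosedFieldType) n (A : 'M[C]_n) (lam : C)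
    (x : 'rV[C]_n) :
  A \is hermsymmx ->
  (forall mu, eigenvalue A mu -> mu \is Num.real -> mu <= lam) ->
  (x *m A *m x^t* ) 0 0 <= lam * (x *m x^t* ) 0 0 /\
  ((x *m A *m x^t* ) 0 0 = lam * (x *m x^t* ) 0 0 -> x *m A = lam *: x).
Proof.
move=> Ah le_lam; have nA := hermitian_normalmx Ah.
have := orthomx_spectralP nA; have uP := spectral_unitarymx A.
rewrite invmx_unitary //; set P := spectralmx A; set d := spectral_diag A => eA.
have gap_ge0 k : 0 <= lam - d 0 k.
  rewrite subr_ge0; apply: le_lam; first exact: spectral_diag_eigenvalue.
  by have /mxOverP := hermitian_spectral_diag_real Ah; apply.
set y := x *m P^t*.
have xE : x = y *m P by rewrite /y mulmxKtV.
have xtE : x^t* = P^t* *m y^t* by rewrite {1}xE trmxC_mul.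
have quadE : (x *m A *m x^t* ) 0 0 = \sum_k d 0 k * (y 0 k * (y 0 k)^* ).
  rewrite {1}xE xtE eA !mulmxA mulmxtVK // -[_ *m P *m P^t*]mulmxA.
  rewrite (unitarymxP uP) mulmx1 mxE; apply: eq_bigr => k _.
  by rewrite mul_mx_diag !mxE mulrCA mulrA.
have normE : (x *m x^t* ) 0 0 = \sum_k y 0 k * (y 0 k)^*.
  rewrite {1}xE xtE mulmxA mulmxtVK // mxE.
  by apply: eq_bigr => k _; rewrite !mxE.
have gapE : lam * (x *m x^t* ) 0 0 - (x *m A *m x^t* ) 0 0 =
            \sum_k (lam - d 0 k) * (y 0 k * (y 0 k)^* ).
  by rewrite quadE normE mulr_sumr -sumrB; apply: eq_bigr => k _; rewrite mulrBl.
have term_ge0 k : 0 <= (lam - d 0 k) * (y 0 k * (y 0 k)^* ).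
  by rewrite mulr_ge0 ?mul_conjC_ge0.
split=> [|/eqP].
  by rewrite -subr_ge0 gapE; apply: sumr_ge0.
rewrite eq_sym -subr_eq0 gapE => /eqP /psumr_eq0P y_eig.
have yd : y *m diag_mx d = lam *: y.
  apply/rowP => k; rewrite mul_mx_diag mxE [RHS]mxE.
  have /eqP := y_eig (fun k _ => term_ge0 k) k isT.
  rewrite mulf_eq0 mul_conjC_eq0 subr_eq0.
  by case/orP => /eqP ->; rewrite ?mul0r ?mulr0 // mulrC.
by rewrite eA xE !mulmxA mulmxtVK // -/y yd -scalemxAl.
Qed.

Lemma symmetric_rayleigh_bound (R : rcfType) n (M : 'M[R]_n) (lam : R) (x : 'rV[R]_n) :
  M^T = M -> (forall mu, eigenvalue M mu -> mu <= lam) ->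
  (x *m M *m x^T) 0 0 <= lam * (x *m x^T) 0 0 /\
  ((x *m M *m x^T) 0 0 = lam * (x *m x^T) 0 0 -> x *m M = lam *: x).
Proof.
move=> Msym le_lam; pose f := real_complex R.
have map_trmxC m p (B : 'M[R]_(m, p)) : (map_mx f B)^t* = map_mx f B^T.
  by apply/matrixP => i j; rewrite !mxE; exact: conjc_real.
have fM_herm : map_mx f M \is hermsymmx.
  apply: realsym_hermsym.
    apply/is_hermitianmxP; rewrite expr0 scale1r.
    by apply/matrixP => i j; rewrite !mxE -[in LHS]Msym mxE.
  by apply/mxOverP => i j; rewrite mxE; apply/complex_realP; exists (M i j).
have le_flam mu : eigenvalue (map_mx f M) mu -> mu \is Num.real -> mu <= f lam.
  by move=> + /RRe_real Emu; rewrite -Emu eigenvalue_map lecR; exact: le_lam.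
have [quad_le quad_eq] := hermitian_rayleigh_bound (map_mx f x) fM_herm le_flam.
have f_entry m p (B : 'M[R]_(m, p)) i j : map_mx f B i j = f (B i j) by rewrite mxE.
rewrite map_trmxC -!map_mxM !f_entry in quad_le quad_eq.
rewrite -lecR rmorphM /=; split => // quad_eq_real.
apply: (map_mx_inj (f := f)); rewrite quad_eq.
  by apply/matrixP => i j; rewrite !mxE rmorphM.
by rewrite quad_eq_real; exact: rmorphM.
Qed.
End Rayleigh.

Lemma sum_sqr_diff (R : comPzRingType) (T : finType) (F : T -> R) :
  \sum_i \sum_j (F i - F j) ^+ 2 =
  2%:R * (#|T|%:R * \sum_i F i ^+ 2 - (\sum_i F i) ^+ 2).
Proof.
have sqrE i j : (F i - F j) ^+ 2 = F i ^+ 2 + F j ^+ 2 - 2%:R * (F i * F j).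
  by ring.
under eq_bigr => i _ do rewrite (eq_bigr _ (fun j _ => sqrE i j)) sumrB big_split /=.
rewrite sumrB big_split /= exchange_big /= !sumr_const.
under [X in _ - X = _]eq_bigr => i _ do rewrite -big_distrr /=.
rewrite -big_distrr /= expr2 big_distrl /=.
under [X in _ = _ * (_ - X)]eq_bigr => i _ do rewrite big_distrr /=.
rewrite -[_ *+ _]mulr_natr; ring.
Qed.

Section Laplacian.
Variables (R : realFieldType) (n : nat) (adj : rel 'I_n).
Hypotheses (adjC : symmetric adj) (adj_irr : irreflexive adj).

Let a u v : R := (adj u v)%:R.
Let d u : R := (deg adj u)%:R.
Let L := laplacian R adj.

Lemma degE u : d u = \sum_v a u v.
Proof.
rewrite /d /deg -sum1dep_card natr_sum big_mkcond /=.
by apply: eq_bigr => v _; rewrite /a; case: (adj u v).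
Qed.

Lemma degE_col v : d v = \sum_u a u v.
Proof. by rewrite degE; apply: eq_bigr => u _; rewrite /a adjC. Qed.

Lemma mul_laplacian (y : 'rV[R]_n) j :
  (y *m L) 0 j = d j * y 0 j - \sum_i y 0 i * a i j.
Proof.
rewrite mxE (bigD1 j) //= [X in _ = _ - X](bigD1 j) //= /a adj_irr mulr0 add0r.
rewrite -sumrN /L /laplacian !mxE eqxx adj_irr subr0 mulrC; congr (_ + _).
by apply: eq_bigr => i /negbTE ij; rewrite !mxE ij sub0r mulrN; case: adj.
Qed.

Lemma laplacian_sym : L^T = L.
Proof.
apply/matrixP => i j; rewrite /L /laplacian !mxE eq_sym adjC.
by case: eqP => [->|].
Qed.

Lemma laplacian_quad (y : 'rV[R]_n) :
  2%:R * (y *m L *m y^T) 0 0 = \sum_i \sum_j a i j * (y 0 i - y 0 j) ^+ 2.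
Proof.
have quadE : (y *m L *m y^T) 0 0 = \sum_j \sum_i a i j * (y 0 j ^+ 2 - y 0 i * y 0 j).
  rewrite mxE; apply: eq_bigr => j _.
  rewrite [y^T _ _]mxE mul_laplacian degE_col big_distrl -sumrB big_distrl /=.
  by apply: eq_bigr => i _; ring.
rewrite mulr_natl mulr2n {1}quadE exchange_big quadE -big_split /=.
apply: eq_bigr => i _; rewrite -big_split /=; apply: eq_bigr => j _.
by rewrite /a adjC; ring.
Qed.

Lemma laplacian_eigenvalue_le mu : eigenvalue L mu -> mu <= n%:R.
Proof.
case/eigenvalueP => y yL y_neq0; set N2 := (y *m y^T) 0 0.
have N2E : N2 = \sum_i y 0 i ^+ 2.
  by rewrite /N2 mxE; apply: eq_bigr => i _; rewrite mxE expr2.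
have N2_gt0 : 0 < N2.
  rewrite N2E lt_def sumr_ge0 ?andbT => [|i _]; last exact: sqr_ge0.
  apply: contraNneq y_neq0 => /psumr_eq0P y0; apply/eqP/rowP => i.
  by apply/eqP; rewrite mxE -sqrf_eq0 y0 // => ? _; exact: sqr_ge0.
have quad_le : 2%:R * (y *m L *m y^T) 0 0 <= 2%:R * (n%:R * N2).
  rewrite laplacian_quad.
  apply: le_trans (_ : _ <= \sum_i \sum_j (y 0 i - y 0 j) ^+ 2) _.
    apply: ler_sum => i _; apply: ler_sum => j _.
    by rewrite ler_piMl ?sqr_ge0 // /a; case: adj.
  by rewrite sum_sqr_diff card_ord N2E ler_pM2l // gerDl oppr_le0 sqr_ge0.
rewrite yL -scalemxAl mxE -/N2 ler_pM2l // in quad_le.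
by rewrite -(ler_pM2r N2_gt0).
Qed.

Let codeg v j := \sum_i a v i * a i j.

Lemma sum_codeg v : \sum_j codeg v j = \sum_i d i * a v i.
Proof.
rewrite exchange_big /=; apply: eq_bigr => i _.
by rewrite -big_distrr /= -degE mulrC.
Qed.

Lemma adj_idem u v : a u v * a u v = a u v.
Proof. by rewrite /a; case: adj; rewrite ?mulr1 ?mulr0. Qed.

Definition centered_row v : 'rV[R]_n := \row_u (a v u - d v / n%:R).

Lemma centered_row_mul_laplacian v j :
  (centered_row v *m L) 0 j = d j * a v j - codeg v j.
Proof.
rewrite mul_laplacian mxE.
under eq_bigr => i _ do rewrite mxE mulrBl.
by rewrite sumrB -big_distrr /= -degE_col /codeg; ring.
Qed.

Lemma quad_centered_row v :
  (centered_row v *m L *m (centered_row v)^T) 0 0 =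
  \sum_j d j * a v j - \sum_j codeg v j * a v j.
Proof.
rewrite mxE.
under eq_bigr => j _ do rewrite centered_row_mul_laplacian !mxE mulrBr.
rewrite sumrB -big_distrl /= sumrB sum_codeg subrr mul0r subr0 -sumrB.
by apply: eq_bigr => j _; rewrite mulrBl -mulrA adj_idem.
Qed.

Lemma norm_centered_row v :
  n%:R * (centered_row v *m (centered_row v)^T) 0 0 = n%:R * d v - d v ^+ 2.
Proof.
have n_neq0 : n%:R != 0 :> R by rewrite pnatr_eq0 -lt0n (leq_ltn_trans _ (ltn_ord v)).
have -> : (centered_row v *m (centered_row v)^T) 0 0 =
          \sum_j (a v j - 2%:R * (d v / n%:R) * a v j + (d v / n%:R) ^+ 2).
  rewrite mxE; apply: eq_bigr => j _; rewrite !mxE -{3}adj_idem; ring.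
rewrite big_split sumrB /= -!big_distrr /= -degE sumr_const card_ord.
by rewrite -mulr_natl; field.
Qed.

Lemma sum_quad_centered_row :
  \sum_v (centered_row v *m L *m (centered_row v)^T) 0 0 =
  \sum_v d v ^+ 2 - 6%:R * (num_triangles adj)%:R.
Proof.
under eq_bigr => v _ do rewrite quad_centered_row.
rewrite sumrB; congr (_ - _).
  rewrite exchange_big /=; apply: eq_bigr => j _.
  by rewrite -big_distrr /= -degE_col expr2.
rewrite -natrM -sum_closed_walks3 // natr_sum; apply: eq_bigr => v _.
rewrite /codeg; under [LHS]eq_bigr => j _ do rewrite big_distrl /=.
rewrite natr_sum exchange_big /=; apply: eq_bigr => i _.
rewrite natr_sum; apply: eq_bigr => j _.
by rewrite /a [adj j v]adjC; case: (adj v i); case: (adj i j); case: (adj v j);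
  rewrite /= ?mulr0 ?mul0r ?mulr1.
Qed.

Lemma sum_norm_centered_row :
  n%:R * \sum_v (centered_row v *m (centered_row v)^T) 0 0 =
  2%:R * n%:R * (num_edges adj)%:R - \sum_v d v ^+ 2.
Proof.
rewrite mulr_sumr; under eq_bigr => v _ do rewrite norm_centered_row.
rewrite sumrB -mulr_sumr -mulrA mulrCA -natrM -sum_adj // natr_sum.
by congr (_ * _ - _); apply: eq_bigr => v _; rewrite degE natr_sum.
Qed.

Lemma centered_row_eigen_nbhd v j mu :
  centered_row v *m L = mu *: centered_row v -> ~~ adj v j ->
  forall i, adj v i -> adj j i.
Proof.
move=> eig nvj i vi.
have entry k : d k * a v k - codeg v k = mu * (a v k - d v / n%:R).
  by rewrite -centered_row_mul_laplacian eig !mxE.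
have codeg_vv : codeg v v = d v.
  by rewrite degE; apply: eq_bigr => u _; rewrite [a u v]/a adjC adj_idem.
have codeg_vj : codeg v j = d v.
  have := entry v; have := entry j.
  by rewrite /a (negbTE nvj) adj_irr codeg_vv /= !mulr0 !sub0r; lra.
have : \sum_k a v k * (1 - a k j) = 0.
  under eq_bigr => k _ do rewrite mulrBr mulr1.
  by rewrite sumrB -degE -[X in _ - X]/(codeg v j) codeg_vj subrr.
have term_ge0 k : 0 <= a v k * (1 - a k j).
  by rewrite mulr_ge0 ?ler0n // subr_ge0 /a; case: adj.
move/psumr_eq0P => /(_ (fun k _ => term_ge0 k)) /(_ i isT); rewrite /a vi mul1r adjC.
by case: adj => //; rewrite subr0 => /eqP; rewrite oner_eq0.
Qed.

Lemma centered_row_eigen_n v :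
  complete_multipartite adj -> centered_row v *m L = n%:R *: centered_row v.
Proof.
move=> /complete_multipartiteP same_nbhd; apply/rowP => j.
have n_neq0 : n%:R != 0 :> R by rewrite pnatr_eq0 -lt0n (leq_ltn_trans _ (ltn_ord v)).
have nonadj_eq i : ~~ adj i j -> a v i = a v j.
  by move/same_nbhd/setP/(_ v); rewrite !inE /a adjC [adj v j]adjC => ->.
have codeg_gap : d v - codeg v j = a v j * (n%:R - d j).
  have -> : n%:R = \sum_(i < n) (1 : R) by rewrite sumr_const card_ord.
  rewrite degE /codeg -sumrB degE_col -sumrB big_distrr /=.
  apply: eq_bigr => i _; have [ij | nij] := boolP (adj i j).
    by rewrite /a ij mulr1 !subrr mulr0.
  by rewrite (nonadj_eq i nij) /a (negbTE nij) /= mulr0 !subr0 mulr1.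
rewrite centered_row_mul_laplacian !mxE.
have -> : codeg v j = d v - a v j * (n%:R - d j) by rewrite -codeg_gap; ring.
by field.
Qed.

Definition rayleigh_gap (lam : R) : R :=
  \sum_v (lam * (centered_row v *m (centered_row v)^T) 0 0 -
          (centered_row v *m L *m (centered_row v)^T) 0 0).

Lemma rayleigh_gap_identity (lam : R) :
  let S := (\sum_(u : 'I_n) deg adj u ^ 2)%N in
  6%:R * n%:R * (num_triangles adj)%:R -
  ((n%:R + lam) * S%:R - 2%:R * n%:R * (num_edges adj)%:R * lam) =
  n%:R * rayleigh_gap lam.
Proof.
move=> S; have -> : S%:R = \sum_v d v ^+ 2.
  by rewrite natr_sum; apply: eq_bigr => v _; rewrite natrX.
rewrite /rayleigh_gap sumrB -mulr_sumr mulrBr mulrCA sum_norm_centered_row.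
by rewrite sum_quad_centered_row; ring.
Qed.

End Laplacian.

Section LargestEigenvalue.
Variables (R : rcfType) (n : nat) (adj : rel 'I_n) (lam : R).
Hypotheses (adjC : symmetric adj) (adj_irr : irreflexive adj).
Hypotheses (lam_eig : eigenvalue (laplacian R adj) lam)
           (lam_max : forall mu, eigenvalue (laplacian R adj) mu -> mu <= lam).

Local Notation L := (laplacian R adj).
Local Notation x := (centered_row R adj).

Lemma centered_row_rayleigh v :
  (x v *m L *m (x v)^T) 0 0 <= lam * (x v *m (x v)^T) 0 0 /\
  ((x v *m L *m (x v)^T) 0 0 = lam * (x v *m (x v)^T) 0 0 -> x v *m L = lam *: x v).
Proof. exact: symmetric_rayleigh_bound (laplacian_sym _ adjC) lam_max. Qed.

Lemma rayleigh_gap_ge0 : 0 <= rayleigh_gap adj lam.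
Proof.
by apply: sumr_ge0 => v _; rewrite subr_ge0; case: (centered_row_rayleigh v).
Qed.

Lemma complete_multipartite_of_rayleigh_gap :
  n%:R * rayleigh_gap adj lam = 0 -> complete_multipartite adj.
Proof.
move=> gap0; apply/(complete_multipartiteP adj_irr) => u v nuv.
have n_gt0 : (0 < n)%N := leq_ltn_trans (leq0n _) (ltn_ord u).
move/eqP: gap0; rewrite mulf_eq0 pnatr_eq0 eqn0Ngt n_gt0 /= => /eqP /psumr_eq0P.
have term_ge0 w : 0 <= lam * (x w *m (x w)^T) 0 0 - (x w *m L *m (x w)^T) 0 0.
  by rewrite subr_ge0; case: (centered_row_rayleigh w).
move=> /(_ (fun w _ => term_ge0 w)) term0.
have eig w : x w *m L = lam *: x w.
  have [_] := centered_row_rayleigh w; apply; apply/eqP.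
  by rewrite eq_sym -subr_eq0; apply/eqP/term0.
have nvu : ~~ adj v u by rewrite adjC.
apply/setP => w; rewrite !inE; apply/idP/idP.
  exact: centered_row_eigen_nbhd (eig u) nuv w.
exact: centered_row_eigen_nbhd (eig v) nvu w.
Qed.

Lemma rayleigh_gap_eq0 : complete_multipartite adj -> rayleigh_gap adj lam = 0.
Proof.
move=> multi.
have eig_n v : x v *m L = n%:R *: x v by exact: centered_row_eigen_n.
have [lam_n | lam_neq_n] := eqVneq lam n%:R.
  by apply: big1 => v _; rewrite eig_n -scalemxAl lam_n [X in _ - X]mxE subrr.
apply: big1 => v _; suff -> : x v = 0 by rewrite !mul0mx !mxE mulr0 subrr.
apply: contraNeq lam_neq_n => xv_neq0.
have eig_L_n : eigenvalue L n%:R by apply/eigenvalueP; exists (x v).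
by rewrite eq_le lam_max // (laplacian_eigenvalue_le adjC adj_irr).
Qed.

End LargestEigenvalue.

Unset Implicit Arguments.

Theorem theorem2 (R : realType) (n : nat) (adj : rel 'I_n) (lam : R) :
  simple_graph adj ->
  largest_eigenvalue (laplacian R adj) lam ->
  let m := num_edges adj in
  let t := num_triangles adj in
  let S := (\sum_(u : 'I_n) (deg adj u) ^ 2)%N in
  ((n%:R + lam) * S%:R - 2%:R * n%:R * m%:R * lam <= 6%:R * n%:R * t%:R) /\
  ((6%:R * n%:R * t%:R = (n%:R + lam) * S%:R - 2%:R * n%:R * m%:R * lam)
     <-> complete_multipartite adj).
Proof.
move=> [adjC adj_irr] [lam_eig lam_max] m t S.
have gapE := rayleigh_gap_identity adjC adj_irr lam.
split; first by rewrite -subr_ge0 gapE mulr_ge0 ?ler0n ?rayleigh_gap_ge0.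
split=> [eq_t | multi].
  apply: (complete_multipartite_of_rayleigh_gap adjC adj_irr lam_max).
  by rewrite -gapE eq_t subrr.
by apply/eqP; rewrite -subr_eq0 gapE rayleigh_gap_eq0 ?mulr0.
Qed.
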